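(* Let $p$ be a prime number and let $d$ be a positive integer dividing $p^n+1$ for some positive integer $n$. Then: (i) there is a positive integer $k$ such that $v_2(\ell_p(r))=k$ for every odd prime factor $r$ of $d$; (ii) if $p>2$ and $k=1$, then $v_2(d)\le v_2(p+1)$, while if $p>2$ and $k>1$, then $v_2(d)\le 1$.
   Context: For coprime integers $a,b$ with $b>0$, $\ell_a(b)$ denotes the multiplicative order of $a$ modulo $b$. For a prime $l$ and positive integer $n$, $v_l(n)$ denotes the exponent of $l$ in the prime factorization of $n$. *)

From mathcomp Require Import all_boot.

(* Multiplicative order of a modulo b (meaningful for coprime a, b with b > 0):
   the least k >= 1 with a^k = 1 (mod b).  For coprime a, b > 0 this k is
   <= totient b <= b, so searching k in 1..b suffices. *)
Definition mult_order (a b : nat) : nat :=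
  (find (fun k => a ^ k.+1 == 1 %[mod b]) (iota 0 b)).+1.

From mathcomp Require Import all_boot zify.
From mathcomp Require Import cyclic.

(* If an odd prime r divides p^n + 1, then the order of p modulo r divides
   2n but not n, so its 2-adic valuation is v_2(n) + 1; this gives (i) with
   k = v_2(n) + 1.  For (ii), p is odd: k = 1 means n is odd and then
   p^n + 1 = (p + 1) Q with Q odd, while k > 1 means n is even and then
   p^n + 1 = 2 (mod 4). *)

Lemma totient_leq n : totient n <= n.
Proof.
rewrite totient_count_coprime -[leqRHS](card_ord n) -sum1_card big_mkord.
by apply: leq_sum => i _; case: coprime.
Qed.

Section MultOrder.

Variables a b : nat.

Lemma expn_lt_mult_order j : 0 < j < mult_order a b -> a ^ j != 1 %[mod b].
Proof.
case: j => [|j] //=; rewrite ltnS => lt_j_ord.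
have lt_j_b : j < b.
  by apply: leq_trans lt_j_ord _; rewrite -[leqRHS](size_iota 0 b) find_size.
have := before_find 0 lt_j_ord.
by rewrite nth_iota // add0n => ->.
Qed.

Hypotheses (b_gt0 : 0 < b) (coprime_ab : coprime a b).

Lemma expn_mult_order : a ^ mult_order a b = 1 %[mod b].
Proof.
set P := fun k => a ^ k.+1 == 1 %[mod b].
have has_P : has P (iota 0 b).
  apply/hasP; exists (totient b).-1.
    by rewrite mem_iota add0n (leq_trans _ (totient_leq b)) // prednK ?totient_gt0.
  by rewrite /P prednK ?totient_gt0 // Euler_exp_totient.
have lt_find : find P (iota 0 b) < b by rewrite -[ltnRHS](size_iota 0 b) -has_find.
by apply/eqP; have := nth_find 0 has_P; rewrite nth_iota.
Qed.

Lemma mult_order_dvdn m : (mult_order a b %| m) = (a ^ m == 1 %[mod b]).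
Proof.
have a_ord := expn_mult_order.
set t := mult_order a b in a_ord *.
have a_tq q : a ^ (q * t) = 1 %[mod b] by rewrite mulnC expnM -modnXm a_ord modnXm exp1n.
apply/idP/idP => [/dvdnP[q ->] | /eqP a_m]; first by rewrite a_tq.
have a_rem : a ^ (m %% t) = 1 %[mod b].
  by rewrite {1}(divn_eq m t) expnD -modnMml a_tq modnMml mul1n in a_m.
apply/negPn/negP => t_ndvd_m.
have /expn_lt_mult_order : 0 < m %% t < t by rewrite lt0n t_ndvd_m ltn_pmod.
by rewrite a_rem eqxx.
Qed.

End MultOrder.

Lemma logn_dvdn_mul_ndvd q t n : prime q -> 0 < n ->
  t %| q * n -> ~~ (t %| n) -> logn q t = (logn q n).+1.
Proof.
move=> q_pr n_gt0 t_qn t_n.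
have t_gt0 : 0 < t by apply: dvdn_gt0 t_qn; rewrite muln_gt0 prime_gt0.
have [u u_q t_def] := pfactor_coprime q_pr t_gt0.
have qn_gt0 : 0 < q * n by rewrite muln_gt0 prime_gt0.
apply/eqP; rewrite eqn_leq; apply/andP; split.
  have := dvdn_leq_log q qn_gt0 t_qn.
  by rewrite lognM ?(prime_gt0 q_pr) // (logn_prime _ q_pr) eqxx.
rewrite ltnNge; apply: contra t_n => le_t_n.
rewrite coprime_sym in u_q.
have u_n : u %| n.
  by rewrite -(Gauss_dvdr _ u_q); apply: dvdn_trans t_qn; rewrite t_def dvdn_mulr.
by rewrite t_def Gauss_dvd ?coprimeXr // u_n pfactor_dvdn.
Qed.

Lemma logn2_mult_order_dvd_expn_addn1 p n r : 0 < n -> prime r -> odd r ->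
  r %| p ^ n + 1 -> logn 2 (mult_order p r) = (logn 2 n).+1.
Proof.
move=> n_gt0 r_pr r_odd r_dvd.
have r_gt0 := prime_gt0 r_pr.
have r_ndvd2 : ~~ (r %| 2).
  by apply: contraL r_odd; rewrite dvdn_prime2 // => /eqP ->.
have coprime_pr : coprime p r.
  rewrite coprime_sym prime_coprime //; apply: contraL r_dvd => r_p.
  by rewrite (dvdn_addr _ (dvdn_exp n_gt0 r_p)) dvdn1 neq_ltn prime_gt1 ?orbT.
apply: logn_dvdn_mul_ndvd => //.
  have /eqP r_mod := r_dvd.
  rewrite mult_order_dvdn // mulnC expnM; apply/eqP.
  have expn_split : (p ^ n) ^ 2 + (p ^ n + 1) = p ^ n * (p ^ n + 1) + 1.
    by rewrite mulnDr muln1 mulnn addnA.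
  have := congr1 (modn^~ r) expn_split.
  by rewrite /= -modnDmr r_mod addn0 -modnDml -modnMmr r_mod muln0 mod0n add0n.
rewrite mult_order_dvdn //; apply: contra r_ndvd2 => /eqP p_n.
by rewrite /dvdn -[2]/(1 + 1) -modnDml -p_n modnDml; exact: r_dvd.
Qed.

Lemma logn2_odd n : odd n -> logn 2 n = 0.
Proof. by move=> n_odd; rewrite logn_coprime // prime_coprime // dvdn2 n_odd. Qed.

Lemma expn_odd_addn1_factor p m : odd p ->
  exists2 Q, odd Q & p ^ m.*2.+1 + 1 = (p + 1) * Q.
Proof.
move=> p_odd; have p_gt0 := odd_gt0 p_odd.
elim: m => [|m [Q Q_odd IH]]; first by exists 1; rewrite ?muln1.
(* p^(2m+3) + 1 = p^2 (p^(2m+1) + 1) - (p^2 - 1) *)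
exists (p * (p * Q) - p + 1).
  rewrite oddD oddB ?leq_pmulr ?muln_gt0 ?p_gt0 ?odd_gt0 //.
  by rewrite !oddM p_odd Q_odd.
have Q_gt0 := odd_gt0 Q_odd.
rewrite doubleS 2!expnS; move: IH; set x := p ^ _ => IH.
clearbody x; clear p_odd Q_odd; nia.
Qed.

Lemma logn2_expn_odd_addn1 p n : odd p -> odd n ->
  logn 2 (p ^ n + 1) = logn 2 (p + 1).
Proof.
move=> p_odd n_odd; have [Q Q_odd factor_pn] := expn_odd_addn1_factor p n./2 p_odd.
rewrite -(odd_double_half n) n_odd add1n factor_pn.
have Q_gt0 := odd_gt0 Q_odd.
by rewrite lognM ?addn1 // (logn2_odd _ Q_odd) addn0.
Qed.

Lemma logn2_expn_even_addn1 p n : odd p -> ~~ odd n -> logn 2 (p ^ n + 1) = 1.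
Proof.
move=> p_odd n_even; rewrite -(even_halfK n_even) -mul2n mulnC expnM.
have [y ->] : exists y, p ^ n./2 = y.*2.+1.
  by exists (p ^ n./2)./2; rewrite -[LHS]odd_double_half oddX p_odd orbT add1n.
have -> : y.*2.+1 ^ 2 + 1 = 2 * (2 * (y * y + y)).+1 by rewrite -mul2n; nia.
by rewrite lognM // (logn_prime _ (isT : prime 2)) logn2_odd // oddS oddM.
Qed.

Theorem lemma1 (p d n : nat) :
  prime p -> 0 < d -> 0 < n -> d %| p ^ n + 1 ->
  exists k : nat,
    0 < k /\
    (forall r : nat, prime r -> odd r -> r %| d -> logn 2 (mult_order p r) = k) /\
    (2 < p -> (k = 1 -> logn 2 d <= logn 2 (p + 1)) /\
              (1 < k -> logn 2 d <= 1)).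
Proof.
move=> p_pr d_gt0 n_gt0 d_dvd.
exists (logn 2 n).+1; split=> //; split.
  move=> r r_pr r_odd r_d; apply: logn2_mult_order_dvd_expn_addn1 => //.
  exact: dvdn_trans r_d d_dvd.
move=> p_gt2.
have p_odd : odd p by apply: contraLR p_gt2 => /(prime_oddPn p_pr) ->.
have le_d := dvdn_leq_log 2 (leq_addl (p ^ n) 1) d_dvd.
have even_n_v2 : ~~ odd n = (0 < logn 2 n) by rewrite -pfactor_dvdn // expn1 dvdn2.
split=> [[n_v2] | n_v2].
  have n_odd : odd n by rewrite -[odd n]negbK even_n_v2 n_v2.
  by rewrite (logn2_expn_odd_addn1 p n p_odd n_odd) in le_d.
have n_even : ~~ odd n by rewrite even_n_v2 -ltnS.
by rewrite (logn2_expn_even_addn1 p n p_odd n_even) in le_d.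
Qed.
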